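(* Let $V$ be a finite-dimensional vector space over $\mathbb{F}_q$ and $\xi:\mathbb{F}_q^{\nu_1}\to V$ a surjective linear map, where $\mathbb{F}_q^{\nu_1}$ carries the Hamming weight. Then there exist an integer $\nu_2\le\nu_1$ and a surjective linear map $\varphi:\mathbb{F}_q^{\nu_2}\to V$ (with $\mathbb{F}_q^{\nu_2}$ carrying the Hamming weight) such that $\operatorname{wt}_{\mathrm{quot},\xi}=\operatorname{wt}_{\mathrm{quot},\varphi}$ on $V$, and $\varphi$ is a parent function, i.e. the vectors $\varphi(e_1),\dots,\varphi(e_{\nu_2})$ are pairwise linearly independent, and $d_H(\ker\varphi)\ge3$.
   Context: For a surjective linear map $\psi:(X,\operatorname{wt}_X)\to Y$, the quotient weight is $\operatorname{wt}_{\mathrm{quot},\psi}(y)=\min\{\operatorname{wt}_X(x):x\in\psi^{-1}(y)\}$. $e_i$ denote standard basis vectors. $d_H(C)$ is the minimum Hamming distance between distinct elements of a code $C$. *)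

From HB Require Import structures.
From mathcomp Require Import all_boot all_order all_algebra.
Set Implicit Arguments. Unset Strict Implicit. Unset Printing Implicit Defensive.
Import GRing.Theory.
Local Open Scope ring_scope.

Definition hwt (F : finFieldType) (n : nat) (x : 'rV[F]_n) : nat :=
  #|[set i : 'I_n | x ord0 i != 0]|.

(* Quotient weight wt_{quot,psi}(y) = min { hwt x : psi x = y }.
   The default value n (maximal possible weight) is only returned when the
   preimage is empty, which never happens for surjective psi. *)
Definition quot_wt (F : finFieldType) (V : vectType F) (n : nat)
    (psi : 'rV[F]_n -> V) (y : V) : nat :=
  \big[minn/n]_(x : 'rV[F]_n | psi x == y) hwt x.

Definition std_e {F : finFieldType} {n : nat} (i : 'I_n) : 'rV[F]_n :=
  delta_mx ord0 i.

Definition min_dist_ge (F : finFieldType) (n : nat) (C : pred 'rV[F]_n) (d : nat) : Prop :=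
  forall x y, C x -> C y -> x != y -> (d <= hwt (x - y))%N.

Definition parent_function (F : finFieldType) (V : vectType F) (n : nat)
    (phi : 'rV[F]_n -> V) : Prop :=
  (forall i j : 'I_n, i != j -> free [:: phi (std_e i); phi (std_e j)]) /\
  min_dist_ge [pred x | phi x == 0] 3.

From HB Require Import structures.
From mathcomp Require Import all_boot all_order all_algebra.
Set Implicit Arguments. Unset Strict Implicit. Unset Printing Implicit Defensive.
Import Order.TTheory GRing.Theory.
Local Open Scope ring_scope.

(* Call coordinate [k] of [xi] redundant when [xi e_k = xi w] for some [w] of
   weight at most 1 with [w_k = 0].  Such a coordinate can be deleted: every
   [x] may be replaced by [x + x_k (w - e_k)], which has the same image,
   vanishes at [k] and is no heavier, so surjectivity and the quotient weight
   survive.  Deleting redundant coordinates one at a time must stop, and a map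
   without redundant coordinate is a parent function: a kernel vector [z] of
   weight at most 2 with [z_k != 0] makes [k] redundant through
   [w = - z_k^-1 (z - z_k e_k)], and both parent conditions fail only through
   such kernel vectors ([e_j], or [e_i - c e_j]). *)

Section InsertZero.
Variables (R : pzRingType) (n : nat).
Implicit Types (k : 'I_n.+1) (y : 'rV[R]_n).

Definition insert0_mx k : 'M[R]_(n, n.+1) := row' k 1%:M.

Lemma mul_insert0_mx_lift k y j : (y *m insert0_mx k) 0 (lift k j) = y 0 j.
Proof.
rewrite mxE (bigD1 j) //= big1 ?addr0 => [|j' nj']; rewrite !mxE ?eqxx ?mulr1 //.
by rewrite (inj_eq lift_inj) (negbTE nj') mulr0.
Qed.

Lemma mul_insert0_mx_at k y : (y *m insert0_mx k) 0 k = 0.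
Proof.
by rewrite mxE big1 // => j _; rewrite !mxE eq_sym (negbTE (neq_lift k j)) mulr0.
Qed.

Lemma col'K_insert0 k (x : 'rV[R]_n.+1) : x 0 k = 0 -> col' k x *m insert0_mx k = x.
Proof.
move=> xk0; apply/rowP => i; case: (unliftP k i) => [j ->|->].
  by rewrite mul_insert0_mx_lift mxE.
by rewrite mul_insert0_mx_at xk0.
Qed.

End InsertZero.

Arguments insert0_mx {R n}.

Section HammingWeight.
Variable F : finFieldType.
Implicit Types n : nat.

Definition supp n (x : 'rV[F]_n) : {set 'I_n} := [set i | x ord0 i != 0].

Lemma hwtE n (x : 'rV[F]_n) : hwt x = #|supp x|.
Proof. by []. Qed.

Lemma hwt_le_dim n (x : 'rV[F]_n) : (hwt x <= n)%N.
Proof. by rewrite -[n in (_ <= n)%N]card_ord max_card. Qed.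

Lemma hwt_le_card n (x : 'rV[F]_n) (A : {set 'I_n}) :
  (forall i, i \notin A -> x 0 i = 0) -> (hwt x <= #|A|)%N.
Proof.
move=> xA; apply/subset_leq_card/subsetP => i; rewrite inE.
by apply: contraR => /xA ->; rewrite eqxx.
Qed.

Lemma hwtD_le n (x y : 'rV[F]_n) : (hwt (x + y) <= hwt x + hwt y)%N.
Proof.
apply: leq_trans (hwt_le_card (A := supp x :|: supp y) _) (leq_card_setU _ _).1.
by move=> i; rewrite !inE negb_or !negbK mxE => /andP[/eqP -> /eqP ->]; rewrite addr0.
Qed.

Lemma hwtZ_le n (c : F) (x : 'rV[F]_n) : (hwt (c *: x) <= hwt x)%N.
Proof. by apply: hwt_le_card => i; rewrite inE negbK mxE => /eqP ->; rewrite mulr0. Qed.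

Lemma hwt_std_e n (i : 'I_n) : hwt (std_e i : 'rV[F]_n) = 1%N.
Proof.
rewrite -(cards1 i); apply: eq_card => j; rewrite !inE !mxE eqxx /=.
by case: (j == i); rewrite ?oner_neq0 ?eqxx.
Qed.

Lemma hwt_insert0 n (k : 'I_n.+1) (y : 'rV[F]_n) : hwt (y *m insert0_mx k) = hwt y.
Proof.
rewrite !hwtE -(card_imset _ (@lift_inj _ k)); apply: eq_card => i.
case: (unliftP k i) => [j ->|->].
  by rewrite mem_imset ?inE ?mul_insert0_mx_lift //; exact: lift_inj.
rewrite inE mul_insert0_mx_at eqxx; apply/esym/negbTE/imsetP => -[j _ /eqP].
by rewrite (negbTE (neq_lift k j)).
Qed.

End HammingWeight.

Section QuotientWeight.
Variables (F : finFieldType) (V : vectType F).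

Lemma quot_wt_le_hwt n (psi : 'rV[F]_n -> V) x : (quot_wt psi (psi x) <= hwt x)%N.
Proof. exact: (@bigmin_le_cond _ nat). Qed.

Lemma quot_wt_attained n (psi : 'rV[F]_n -> V) x :
  exists2 y, psi y = psi x & quot_wt psi (psi x) = hwt y.
Proof.
have [y /eqP psi_y wt_y] := @eq_bigmin _ nat _ n x (fun y => psi y == psi x) (@hwt F n)
  (eqxx _) (fun y _ => hwt_le_dim y).
by exists y.
Qed.

Lemma leq_quot_wt n1 n2 (psi1 : 'rV[F]_n1 -> V) (psi2 : 'rV[F]_n2 -> V) y :
    (forall y', psi2 y' = psi2 y -> exists2 x, psi1 x = psi2 y & (hwt x <= hwt y')%N) ->
  (quot_wt psi1 (psi2 y) <= quot_wt psi2 (psi2 y))%N.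
Proof.
move=> lighter; have [y' psi_y' ->] := quot_wt_attained psi2 y.
have [x <- le_xy'] := lighter y' psi_y'.
exact: leq_trans (quot_wt_le_hwt psi1 x) le_xy'.
Qed.

End QuotientWeight.

Section RedundantCoordinate.
Variables (F : finFieldType) (V : vectType F).

Definition redundant_coord n (xi : 'rV[F]_n -> V) (k : 'I_n) : bool :=
  [exists w : 'rV[F]_n, [&& w 0 k == 0, (hwt w <= 1)%N & xi w == xi (std_e k)]].

Lemma redundant_coord_of_ker n (xi : {linear 'rV[F]_n -> V}) (z : 'rV[F]_n) k :
  xi z = 0 -> z 0 k != 0 -> (hwt z <= 2)%N -> redundant_coord xi k.
Proof.
move=> xi_z zk wt_z; apply/existsP; exists (- (z 0 k)^-1 *: (z - z 0 k *: std_e k)).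
apply/and3P; split.
- by rewrite !mxE !eqxx mulr1 subrr mulr0.
- apply: leq_trans (hwt_le_card (A := supp z :\ k) _) _.
    move=> i; rewrite !inE negb_and !negbK !mxE eqxx /=.
    have [-> _|_ /= /eqP ->] := eqVneq i k; first by rewrite mulr1 subrr mulr0.
    by rewrite mulr0 subrr mulr0.
  by move: wt_z; rewrite hwtE (cardsD1 k) inE zk.
- rewrite linearZ linearB linearZ /= xi_z sub0r scalerN scaleNr opprK scalerA.
  by rewrite mulVf // scale1r.
Qed.

Lemma parent_function_of_irredundant n (xi : {linear 'rV[F]_n -> V}) :
  (forall k, ~~ redundant_coord xi k) -> parent_function xi.
Proof.
move=> irred; split=> [i j nij | x y /eqP xi_x /eqP xi_y neq_xy].
- rewrite free_cons seq1_free span_seq1 /=; apply/andP; split.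
    apply/vlineP => -[c xi_ei].
    apply/(negP (irred i))/(redundant_coord_of_ker (z := std_e i - c *: std_e j)).
    + by rewrite linearB linearZ /= xi_ei subrr.
    + by rewrite !mxE !eqxx (negbTE nij) /= mulr0 subr0 oner_neq0.
    + rewrite -scaleNr (leq_trans (hwtD_le _ _)) // hwt_std_e ltnS.
      by rewrite (leq_trans (hwtZ_le _ _)) ?hwt_std_e.
  apply/eqP => xi_ej; apply/(negP (irred j))/(redundant_coord_of_ker (z := std_e j)).
  + exact: xi_ej.
  + by rewrite !mxE !eqxx oner_neq0.
  + by rewrite hwt_std_e.
- have [k xy_k] : exists k, (x - y) 0 k != 0.
    apply/existsP; apply: contraR neq_xy => /existsPn xy0.
    by rewrite -subr_eq0; apply/eqP/rowP => k; move/negPn/eqP: (xy0 k) ->; rewrite mxE.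
  rewrite ltnNge; apply: contra (irred k); apply: redundant_coord_of_ker xy_k.
  by rewrite linearB /= xi_x xi_y subrr.
Qed.

End RedundantCoordinate.

Section DeleteCoordinate.
Variables (F : finFieldType) (V : vectType F) (n : nat).
Variables (xi : {linear 'rV[F]_n.+1 -> V}) (k : 'I_n.+1).
Hypothesis red_k : redundant_coord xi k.

Definition delete_coord : {linear 'rV[F]_n -> V} := xi \o mulmxr (insert0_mx k).

Lemma delete_coord_lighter x : exists2 y, delete_coord y = xi x & (hwt y <= hwt x)%N.
Proof.
have [w /and3P[/eqP w_k wt_w /eqP xi_w]] := existsP red_k.
pose x' := x + x 0 k *: (w - std_e k).
have x'_k : x' 0 k = 0 by rewrite !mxE w_k !eqxx sub0r mulrN1 subrr.
exists (col' k x').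
  by rewrite /= col'K_insert0 // linearD linearZ linearB /= xi_w subrr scaler0 addr0.
rewrite -(hwt_insert0 k) col'K_insert0 //.
have [x_k0|x_k] := eqVneq (x 0 k) 0; first by rewrite /x' x_k0 scale0r addr0.
apply: leq_trans (hwt_le_card (A := (supp x :\ k) :|: supp w) _) _.
  move=> i; rewrite !inE negb_or negb_and !negbK.
  have [-> _|ne_ik /= /andP[/eqP x_i /eqP w_i]] := eqVneq i k; first exact: x'_k.
  by rewrite !mxE x_i w_i (negbTE ne_ik) /= subr0 mulr0 addr0.
apply: leq_trans (leq_card_setU _ _).1 _.
by rewrite hwtE (cardsD1 k (supp x)) inE x_k addnC leq_add2r.
Qed.

Lemma delete_coord_surj :
  (forall v, exists x, xi x = v) -> forall v, exists y, delete_coord y = v.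
Proof.
move=> xi_surj v; have [x <-] := xi_surj v.
by have [y <- _] := delete_coord_lighter x; exists y.
Qed.

Lemma quot_wt_delete_coord :
  (forall v, exists x, xi x = v) -> forall v, quot_wt xi v = quot_wt delete_coord v.
Proof.
move=> xi_surj v; have [x <-] := xi_surj v; apply/anti_leq/andP; split; last first.
  by apply: leq_quot_wt => x' <-; exact: delete_coord_lighter.
have [y <- _] := delete_coord_lighter x.
by apply: leq_quot_wt => y' <-; exists (y' *m insert0_mx k); rewrite ?hwt_insert0.
Qed.

End DeleteCoordinate.

Theorem corollary4p1 (F : finFieldType) (V : vectType F) (n1 : nat)
    (xi : {linear 'rV[F]_n1 -> V})
    (xi_surj : forall v : V, exists x, xi x = v) :
  exists (n2 : nat) (phi : {linear 'rV[F]_n2 -> V}),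
    [/\ (n2 <= n1)%N,
        (forall v : V, exists x, phi x = v),
        (forall v : V, quot_wt xi v = quot_wt phi v)
      & parent_function phi].
Proof.
elim: n1 xi xi_surj => [|n IH] xi xi_surj.
  by exists 0%N, xi; split=> //; apply: parent_function_of_irredundant => -[].
have [/existsP[k red_k]|/existsPn irred] := boolP [exists k, redundant_coord xi k].
  have [n2 [phi [le_n2 phi_surj wt_phi parent_phi]]] :=
    IH _ (delete_coord_surj red_k xi_surj).
  exists n2, phi; split=> // [|v]; first exact: leqW.
  by rewrite (quot_wt_delete_coord red_k xi_surj) wt_phi.
by exists n.+1, xi; split=> //; exact: parent_function_of_irredundant.
Qed.
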